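(* Let $G=(V,E)$ be a connected undirected unweighted graph on $n$ nodes, let $S\subseteq V$, and let $\delta\geq 1$ be a real number. Then the expected absorption time of the positional Voter process on $G$ with biased set $S$ and bias $\delta$ satisfies $\operatorname{T}(G^S,\delta)\leq n^5$.
   Context: Positional Voter model. A graph $G=(V,E,w)$ has node set $V$ with $|V|=n$, edge set $E\subseteq V\times V$ and weights $w\colon E\to\mathbb{R}_{>0}$; $\operatorname{in}(u)=\{v\in V:(v,u)\in E\}$. ''Undirected unweighted'' means $E$ is symmetric and $w\equiv 1$. A configuration is a set $X\subseteq V$ (the nodes carrying the novel trait $A$; the others carry trait $B$). Given a biased set $S\subseteq V$ and bias $\delta\ge 0$, define $f^S_X(v\mid u)=1+\delta$ if $v\in X$ and $u\in S$, and $f^S_X(v\mid u)=1$ otherwise. The process $(\mathcal{X}_t)_{t\ge0}$ evolves as follows: given $\mathcal{X}_t=X$, a node $u$ is chosen uniformly at random from $V$, then a node $v\in\operatorname{in}(u)$ is chosen with probability $\frac{f^S_X(v\mid u)\,w(v,u)}{\sum_{x\in\operatorname{in}(u)} f^S_X(x\mid u)\,w(x,u)}$, and $u$ adopts the trait of $v$, i.e. $\mathcal{X}_{t+1}=X\cup\{u\}$ if $v\in X$ and $\mathcal{X}_{t+1}=X\setminus\{u\}$ otherwise. Unless stated otherwise, $\mathcal{X}_0=\{u\}$ with $u$ uniformly random in $V$. The absorption time is the first $t$ with $\mathcal{X}_t\in\{\emptyset,V\}$, and $\operatorname{T}(G^S,\delta)$ denotes its expectation. *)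

From HB Require Import structures.
From mathcomp Require Import all_boot all_order all_algebra.
From mathcomp Require Import all_classical all_reals all_analysis.
Set Implicit Arguments. Unset Strict Implicit. Unset Printing Implicit Defensive.
Import Order.TTheory GRing.Theory Num.Theory.
Local Open Scope ring_scope.

(* Graph: node set V (finType), edge relation e (e v u means (v,u) \in E),
   weights identically 1 (unweighted). in(u) = [set v | e v u]. *)

Definition fbias (R : realType) (V : finType) (S : {set V}) (delta : R)
  (X : {set V}) (v u : V) : R :=
  if (v \in X) && (u \in S) then 1 + delta else 1.

Definition pick_prob (R : realType) (V : finType) (e : rel V) (S : {set V})
  (delta : R) (X : {set V}) (u v : V) : R :=
  if e v u then fbias S delta X v u / \sum_(x | e x u) fbias S delta X x u
  else 0.

Definition step (V : finType) (X : {set V}) (u v : V) : {set V} :=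
  if v \in X then u |: X else X :\ u.

Definition trans (R : realType) (V : finType) (e : rel V) (S : {set V})
  (delta : R) (X Y : {set V}) : R :=
  (#|V|%:R)^-1 * \sum_(u : V) \sum_(v : V)
     pick_prob e S delta X u v * ((step X u v == Y)%:R).

Definition absorbing (V : finType) (X : {set V}) : bool :=
  (X == finset.set0) || (X == [set: V]).

Definition init_dist (R : realType) (V : finType) (Y : {set V}) : R :=
  (#|V|%:R)^-1 * \sum_(u : V) ((Y == [set u])%:R).

(* surv t Y = P(X_t = Y and X_s is not absorbing for all s <= t) *)
Fixpoint surv (R : realType) (V : finType) (e : rel V) (S : {set V})
  (delta : R) (t : nat) (Y : {set V}) : R :=
  match t with
  | 0 => if absorbing Y then 0 else init_dist R Y
  | t'.+1 => if absorbing Y then 0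
             else \sum_(X : {set V}) surv e S delta t' X * trans e S delta X Y
  end.

(* P(tau > t), tau = absorption time *)
Definition surv_prob (R : realType) (V : finType) (e : rel V) (S : {set V})
  (delta : R) (t : nat) : R :=
  \sum_(Y : {set V}) surv e S delta t Y.

(* T(G^S, delta) = E[tau] = sum_{t >= 0} P(tau > t), in the extended reals *)
Definition absorption_time (R : realType) (V : finType) (e : rel V)
  (S : {set V}) (delta : R) : \bar R :=
  (\sum_(0 <= t <oo) (surv_prob e S delta t)%:E)%E.

From HB Require Import structures.
From mathcomp Require Import all_boot all_order all_algebra.
From mathcomp Require Import all_classical all_reals all_analysis.
From mathcomp Require Import ring lra.
Import Order.TTheory GRing.Theory Num.Theory.
Set Implicit Arguments. Unset Strict Implicit. Unset Printing Implicit Defensive.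
Local Open Scope ring_scope.

(* For a configuration X let vol X be the sum of the degrees of the nodes of X and
   M = vol V.  The proof is a drift argument for the potential
   potential X = M^2 - (vol X)^2, which lies between 0 and n^4 (n = #|V|).
   - Once the updating node u is chosen, the expected change of the potential is
     at most 2 (vol X) (cut_flow X u) - [u \notin X] deg u * (in-neighbours of u
     in X); this is the only place where the bias 1 + delta >= 1 matters
     (drift_inside, drift_outside, local_drift).
   - The cut flows sum to 0 since the graph is undirected (cut_flow_sum), and by
     connectivity some node outside a non-absorbing X has a neighbour in X
     (boundary_edge); averaging over u, the potential drops by at least 1/n in
     expectation at every non-absorbing step (drift).
   - A general additive-drift bound for the process (section AdditiveDrift)
     turns "bounded by B, drops by eps" into E[absorption time] <= B / eps;
     with B = n^4 and eps = 1/n this is the n^5 bound. *)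

Lemma sum_const_count (R : pzSemiRingType) (I : finType) (P : pred I) (k : R) :
  \sum_(i | P i) k = (\sum_(i | P i) 1) * k.
Proof. by rewrite mulr_suml; apply: eq_bigr => i _; rewrite mul1r. Qed.

Lemma setU1_id (T : finType) (A : {set T}) (x : T) : x \in A -> x |: A = A.
Proof. by move=> xA; apply/finset.setUidPr; rewrite finset.sub1set. Qed.

Lemma setD1_id (T : finType) (A : {set T}) (x : T) : x \notin A -> A :\ x = A.
Proof.
by move=> xA; apply/finset.setDidPl; rewrite disjoint_sym finset.disjoints1.
Qed.

(* A node of degree a + b,
   with a neighbours inside and b outside the current configuration, is
   updated; it copies an inside neighbour with weight c >= 1 (the bias) and an
   outside one with weight 1, and the potential is M^2 - p^2 with p = vol X. *)
Section DriftAlgebra.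
Variable R : realFieldType.

(* The node is in X: with probability b / (c a + b) it leaves and p drops
   by a + b. *)
Lemma drift_inside (c a b p M : R) :
  1 <= c -> 0 <= a -> 0 <= b -> 0 < a + b -> 0 <= p ->
  (c * a * (M ^+ 2 - p ^+ 2) + b * (M ^+ 2 - (p - (a + b)) ^+ 2)) / (c * a + b)
    - (M ^+ 2 - p ^+ 2) <= 2 * p * b.
Proof.
move=> c1 a0 b0 d0 p0; have W0 : 0 < c * a + b by nra.
rewrite (_ : _ - _ = b * (a + b) * (2 * p - (a + b)) / (c * a + b)); last first.
  by field; rewrite gt_eqF.
rewrite ler_pdivrMr //.
have h1 : 0 <= 2 * p * b * ((c - 1) * a) by rewrite !mulr_ge0 //; nra.
have h2 : 0 <= b * (a + b) ^+ 2 by rewrite mulr_ge0 // sqr_ge0.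
nra.
Qed.

(* The node is outside X: with probability c a / (c a + b) it joins and p
   grows by a + b. *)
Lemma drift_outside (c a b p M : R) :
  1 <= c -> 0 <= a -> 0 <= b -> 0 < a + b -> 0 <= p ->
  (c * a * (M ^+ 2 - (p + (a + b)) ^+ 2) + b * (M ^+ 2 - p ^+ 2)) / (c * a + b)
    - (M ^+ 2 - p ^+ 2) <= - (2 * p * a) - (a + b) * a.
Proof.
move=> c1 a0 b0 d0 p0; have W0 : 0 < c * a + b by nra.
rewrite (_ : _ - _ = - (c * a * (a + b) * (2 * p + (a + b))) / (c * a + b)); last first.
  by field; rewrite gt_eqF.
rewrite ler_pdivrMr //.
have h1 : 0 <= (2 * p + (a + b)) * a * ((c - 1) * b) by rewrite !mulr_ge0 //; nra.
nra.
Qed.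

End DriftAlgebra.

Section GraphFacts.
Variables (V : finType) (e : rel V).
Hypotheses (e_sym : symmetric e) (e_conn : forall u v : V, connect e u v).

Lemma nonabsorbing_witnesses (X : {set V}) : ~~ absorbing X ->
  (exists x, x \in X) /\ (exists y, y \notin X).
Proof.
rewrite /absorbing negb_or => /andP[/set0Pn[x xX] XT]; split; first by exists x.
apply/existsP; apply: contraNT XT => /existsPn noout.
by apply/eqP/setP => y; rewrite inE; apply/negPn/noout.
Qed.

Lemma connected_in_nbr (u w : V) : w != u -> exists v, e v u.
Proof.
move=> wu; have /connectP[[|z p] /= pth wE] := e_conn u w.
  by rewrite wE eqxx in wu.
by case/andP: pth => euz _; exists z; rewrite e_sym.
Qed.

(* A non-absorbing configuration has an edge across its boundary, since a set
   closed under e contains the whole connected graph. *)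
Lemma boundary_edge (X : {set V}) : ~~ absorbing X ->
  exists u v, [/\ u \notin X, v \in X & e v u].
Proof.
move=> nX; have [[x xX] [y yX]] := nonabsorbing_witnesses nX.
case: (boolP [exists u, exists v, [&& u \notin X, v \in X & e v u]]).
  by case/existsP => u /existsP[v /and3P[]]; exists u, v.
move/existsPn => noedge; have Xclosed : closed_mem e (mem X).
  move=> a b eab; case aX: (a \in X); case bX: (b \in X) => //.
    by have /existsPn/(_ a) := noedge b; rewrite bX aX eab.
  by have /existsPn/(_ b) := noedge a; rewrite bX aX e_sym eab.
by have := closed_connect Xclosed (e_conn x y); rewrite xX (negbTE yX).
Qed.

End GraphFacts.

Section Potential.
Variables (R : realType) (V : finType) (e : rel V).

Definition nbrs_in (X : {set V}) (u : V) : R := \sum_(v | e v u && (v \in X)) 1.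
Definition nbrs_out (X : {set V}) (u : V) : R := \sum_(v | e v u && (v \notin X)) 1.
Definition indeg (u : V) : R := \sum_(v | e v u) 1.
Definition vol (X : {set V}) : R := \sum_(v in X) indeg v.
Definition total_vol : R := \sum_v indeg v.
Definition potential (X : {set V}) : R := total_vol ^+ 2 - vol X ^+ 2.
Definition cut_flow (X : {set V}) (u : V) : R :=
  if u \in X then nbrs_out X u else - nbrs_in X u.

Lemma count_ge0 (P : pred V) : 0 <= \sum_(v | P v) (1 : R).
Proof. by apply: sumr_ge0 => v _; exact: ler01. Qed.

Lemma count_le_card (P : pred V) : \sum_(v | P v) (1 : R) <= #|V|%:R.
Proof.
rewrite -[#|V|]/#|xpredT| -sumr_const [leRHS](bigID P) /= lerDl.
exact: count_ge0.
Qed.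

Lemma indeg_split (X : {set V}) (u : V) : indeg u = nbrs_in X u + nbrs_out X u.
Proof. by rewrite /indeg (bigID (mem X)). Qed.

Lemma vol_ge0 (X : {set V}) : 0 <= vol X.
Proof. by apply: sumr_ge0 => v _; exact: count_ge0. Qed.

Lemma vol_le_total (X : {set V}) : vol X <= total_vol.
Proof.
rewrite /total_vol (bigID (mem X)) /= lerDl.
by apply: sumr_ge0 => v _; exact: count_ge0.
Qed.

Lemma total_vol_le_card : total_vol <= #|V|%:R ^+ 2.
Proof.
apply: (le_trans (ler_sum _ (fun v _ => count_le_card (e^~ v)))).
by rewrite sumr_const -[#|xpredT|]/#|V| expr2 mulr_natr.
Qed.

Lemma potential_ge0 (X : {set V}) : 0 <= potential X.
Proof.
rewrite /potential subr_ge0 ler_pXn2r ?nnegrE ?vol_le_total ?vol_ge0 //.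
exact: le_trans (vol_ge0 X) (vol_le_total X).
Qed.

Lemma potential_le_card (X : {set V}) : potential X <= #|V|%:R ^+ 4.
Proof.
have tv0 : 0 <= total_vol := le_trans (vol_ge0 X) (vol_le_total X).
have tv_sq : total_vol ^+ 2 <= #|V|%:R ^+ 4.
  rewrite -[4%N]/(2 * 2)%N exprM ler_pXn2r ?nnegrE ?total_vol_le_card //.
by rewrite /potential (le_trans _ tv_sq) // lerBlDr lerDl sqr_ge0.
Qed.

Lemma volU1 (X : {set V}) (u : V) : u \notin X -> vol (u |: X) = vol X + indeg u.
Proof. by move=> uX; rewrite /vol big_setU1 //= addrC. Qed.

Lemma volD1 (X : {set V}) (u : V) : u \in X -> vol (X :\ u) = vol X - indeg u.
Proof. by move=> uX; rewrite /vol (big_setD1 _ uX) /= addrC addrK. Qed.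

(* Every edge across the cut is counted once with each sign. *)
Lemma cut_flow_sum (e_sym : symmetric e) (X : {set V}) : \sum_u cut_flow X u = 0.
Proof.
rewrite /cut_flow (bigID (mem X)) /= (eq_bigr (nbrs_out X)) => [|u /= ->//].
rewrite [s in _ + s](eq_bigr (fun u => - nbrs_in X u)) => [|u /negbTE ->//].
rewrite sumrN; apply/eqP; rewrite subr_eq0 /nbrs_out /nbrs_in; apply/eqP.
under eq_bigr do rewrite big_mkcondl /=.
under [RHS]eq_bigr do rewrite big_mkcondl /=.
rewrite exchange_big /=; apply: eq_bigr => v _; apply: eq_bigr => u _.
by rewrite e_sym.
Qed.

Lemma indeg_pos (e_sym : symmetric e) (e_conn : forall u v : V, connect e u v)
  (X : {set V}) (u : V) : ~~ absorbing X -> 0 < indeg u.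
Proof.
move=> nX; have [[x xX] [y yX]] := nonabsorbing_witnesses nX.
have [w wu] : exists w, w != u.
  case: (eqVneq x u) => [xu|]; last by exists x.
  by exists y; apply: contraNneq yX => ->; rewrite -xu.
have [v evu] := connected_in_nbr e_sym e_conn wu.
rewrite /indeg (bigD1 v) //= ltr_pwDl ?ltr01 //; exact: count_ge0.
Qed.

End Potential.

Section OneStepDrift.
Variables (R : realType) (V : finType) (e : rel V) (S : {set V}) (delta : R).
Hypothesis delta_ge0 : 0 <= delta.

Definition bias (u : V) : R := if u \in S then 1 + delta else 1.

Lemma bias_ge1 (u : V) : 1 <= bias u.
Proof. by rewrite /bias; case: (u \in S); rewrite ?lerDl. Qed.

Lemma pick_weight (X : {set V}) (u : V) :
  \sum_(x | e x u) fbias S delta X x u = bias u * nbrs_in R e X u + nbrs_out R e X u.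
Proof.
rewrite (bigID (mem X)) /= mulrC /nbrs_in /nbrs_out -sum_const_count.
congr (_ + _); apply: eq_bigr => v /andP[_ vX]; rewrite /fbias /bias.
  by rewrite vX.
by rewrite (negbTE vX).
Qed.

Lemma pick_expectation (X : {set V}) (u : V) (F : {set V} -> R) :
  \sum_v pick_prob e S delta X u v * F (step X u v) =
  (bias u * nbrs_in R e X u * F (u |: X) + nbrs_out R e X u * F (X :\ u)) /
    (bias u * nbrs_in R e X u + nbrs_out R e X u).
Proof.
rewrite /pick_prob pick_weight; set W := (_ + _).
transitivity (\sum_(v | e v u) fbias S delta X v u / W * F (step X u v)).
  by rewrite [RHS]big_mkcond; apply: eq_bigr => v _; case: (e v u); rewrite ?mul0r.
have joins : \sum_(v | e v u && (v \in X)) fbias S delta X v u / W * F (step X u v)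
    = nbrs_in R e X u * (bias u / W * F (u |: X)).
  rewrite /nbrs_in mulr_suml; apply: eq_bigr => v /andP[_ vX].
  by rewrite mul1r /fbias /bias /step vX.
have leaves : \sum_(v | e v u && (v \notin X)) fbias S delta X v u / W * F (step X u v)
    = nbrs_out R e X u * (1 / W * F (X :\ u)).
  rewrite /nbrs_out mulr_suml; apply: eq_bigr => v /andP[_ vX].
  by rewrite mul1r /fbias /step (negbTE vX).
by rewrite (bigID (mem X)) /= joins leaves; ring.
Qed.

Lemma local_drift (X : {set V}) (u : V) : 0 < indeg R e u ->
  \sum_v pick_prob e S delta X u v * potential R e (step X u v) - potential R e X <=
  2 * vol R e X * cut_flow R e X u
    - (if u \in X then 0 else indeg R e u * nbrs_in R e X u).
Proof.
move=> deg_pos; rewrite pick_expectation /cut_flow.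
have a0 : 0 <= nbrs_in R e X u := count_ge0 _ _.
have b0 : 0 <= nbrs_out R e X u := count_ge0 _ _.
have p0 := vol_ge0 R e X.
have c1 := bias_ge1 u.
rewrite (indeg_split R e X u) in deg_pos *.
case: (boolP (u \in X)) => uX.
  rewrite setU1_id // /potential volD1 // (indeg_split R e X u) subr0.
  exact: drift_inside.
rewrite setD1_id // /potential volU1 // (indeg_split R e X u) mulrN.
exact: drift_outside.
Qed.

Lemma trans_expectation (X : {set V}) (H : {set V} -> R) :
  \sum_Y trans e S delta X Y * H Y =
  #|V|%:R^-1 * \sum_u \sum_v pick_prob e S delta X u v * H (step X u v).
Proof.
rewrite /trans; under eq_bigr do rewrite -mulrA.
rewrite -big_distrr /=; congr (_ * _).
transitivity (\sum_Y \sum_u \sum_v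
   pick_prob e S delta X u v * (step X u v == Y)%:R * H Y).
  apply: eq_bigr => Y _; rewrite big_distrl; apply: eq_bigr => u _.
  by rewrite big_distrl.
rewrite exchange_big; apply: eq_bigr => u _; rewrite exchange_big.
apply: eq_bigr => v _.
rewrite (bigD1 (step X u v)) //= eqxx mulr1 big1 ?addr0 //.
by move=> Y /negbTE; rewrite eq_sym => ->; rewrite mulr0 mul0r.
Qed.

(* The potential drops by at least 1/n in expectation from any non-absorbing
   configuration: the cut-flow terms cancel, and a boundary node outside X
   contributes at least 1. *)
Lemma drift (e_sym : symmetric e) (e_conn : forall u v : V, connect e u v)
  (X : {set V}) : ~~ absorbing X ->
  \sum_Y trans e S delta X Y * potential R e Y <= potential R e X - #|V|%:R^-1.
Proof.
move=> nX; have [u0 [v0 [u0X v0X ev0u0]]] := boundary_edge e_sym e_conn nX.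
set n : R := #|V|%:R; set p := potential R e X.
have n0 : 0 < n by rewrite ltr0n; apply/card_gt0P; exists u0.
pose change u := \sum_v pick_prob e S delta X u v * potential R e (step X u v) - p.
have total_change : \sum_u change u <= -1.
  have deg_pos u : 0 < indeg R e u := indeg_pos R e_sym e_conn u nX.
  apply: le_trans (ler_sum _ (fun u _ => local_drift X (deg_pos u))) _.
  rewrite sumrB -big_distrr /= cut_flow_sum // mulr0 sub0r lerN2 (bigD1 u0) //=.
  have in1 : 1 <= nbrs_in R e X u0.
    by rewrite /nbrs_in (bigD1 v0) ?ev0u0 ?v0X //= lerDl count_ge0.
  have out0 : 0 <= nbrs_out R e X u0 := count_ge0 _ _.
  have rest : 0 <= \sum_(u | u != u0)
      (if u \in X then 0 else indeg R e u * nbrs_in R e X u).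
    by apply: sumr_ge0 => u _; case: ifP => // _; rewrite mulr_ge0 ?count_ge0.
  rewrite (negbTE u0X) (indeg_split R e X u0); nra.
have split_change : \sum_u \sum_v pick_prob e S delta X u v * potential R e (step X u v)
    = \sum_u change u + n * p.
  by rewrite sumrB sumr_const -[#|xpredT|]/#|V| mulr_natl subrK.
rewrite trans_expectation split_change mulrDr mulrA mulVf ?gt_eqF // mul1r.
have ninv_ge0 : 0 <= n^-1 by rewrite invr_ge0 ltW.
have := ler_wpM2l ninv_ge0 total_change; lra.
Qed.

End OneStepDrift.

Section AdditiveDrift.
Variables (R : realType) (V : finType) (e : rel V) (S : {set V}) (delta : R).
Hypothesis delta_ge0 : 0 <= delta.

Lemma pick_prob_ge0 (X : {set V}) (u v : V) : 0 <= pick_prob e S delta X u v.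
Proof.
have fbias_ge0 x : 0 <= fbias S delta X x u.
  by rewrite /fbias; case: ifP => _; rewrite ?addr_ge0 ?ler01.
rewrite /pick_prob; case: (e v u) => //.
by rewrite divr_ge0 //; apply: sumr_ge0.
Qed.

Lemma trans_ge0 (X Y : {set V}) : 0 <= trans e S delta X Y.
Proof.
rewrite mulr_ge0 ?invr_ge0 //; apply: sumr_ge0 => u _; apply: sumr_ge0 => v _.
by rewrite mulr_ge0 ?pick_prob_ge0.
Qed.

Lemma init_dist_ge0 (Y : {set V}) : 0 <= init_dist R Y.
Proof. by rewrite mulr_ge0 ?invr_ge0 //; apply: sumr_ge0. Qed.

Lemma init_dist_sum : (0 < #|V|)%N -> \sum_(Y : {set V}) init_dist R Y = 1.
Proof.
move=> V_ne; rewrite /init_dist -big_distrr /= exchange_big /=.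
rewrite (eq_bigr (fun _ => 1)) => [|u _]; last first.
  by rewrite (bigD1 [set u]) //= eqxx big1 ?addr0 // => Y /negbTE ->.
by rewrite sumr_const -[#|xpredT|]/#|V| mulVf // pnatr_eq0 -lt0n.
Qed.

Lemma surv_ge0 (t : nat) (Y : {set V}) : 0 <= surv e S delta t Y.
Proof.
elim: t Y => [|t IH] Y /=; case: (absorbing Y) => //; first exact: init_dist_ge0.
by apply: sumr_ge0 => X _; rewrite mulr_ge0 ?trans_ge0.
Qed.

Lemma surv_absorbing (t : nat) (Y : {set V}) : absorbing Y -> surv e S delta t Y = 0.
Proof. by case: t => [|t] /= ->. Qed.

Lemma surv_prob_ge0 (t : nat) : 0 <= surv_prob e S delta t.
Proof. by apply: sumr_ge0 => Y _; exact: surv_ge0. Qed.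

Section Drift.
Variables (h : {set V} -> R) (eps : R).
Hypothesis h_ge0 : forall X, 0 <= h X.
Hypothesis h_drift : forall X, ~~ absorbing X ->
  \sum_Y trans e S delta X Y * h Y <= h X - eps.

Definition surv_mean (t : nat) : R := \sum_Y surv e S delta t Y * h Y.

Lemma surv_mean_ge0 (t : nat) : 0 <= surv_mean t.
Proof. by apply: sumr_ge0 => Y _; rewrite mulr_ge0 ?surv_ge0. Qed.

Lemma surv_mean_step (t : nat) :
  surv_mean t.+1 <= surv_mean t - eps * surv_prob e S delta t.
Proof.
apply: (@le_trans _ _ (\sum_Y (\sum_X surv e S delta t X * trans e S delta X Y) * h Y)).
  apply: ler_sum => Y _ /=; case: (absorbing Y) => //.
  rewrite mul0r mulr_ge0 //; apply: sumr_ge0 => X _.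
  by rewrite mulr_ge0 ?surv_ge0 ?trans_ge0.
have -> : \sum_Y (\sum_X surv e S delta t X * trans e S delta X Y) * h Y =
    \sum_X surv e S delta t X * \sum_Y trans e S delta X Y * h Y.
  under eq_bigr do rewrite big_distrl /=.
  rewrite exchange_big; apply: eq_bigr => X _; rewrite big_distrr /=.
  by apply: eq_bigr => Y _; rewrite mulrA.
rewrite /surv_prob mulr_sumr -sumrB; apply: ler_sum => X _.
case: (boolP (absorbing X)) => aX; first by rewrite surv_absorbing // !mul0r mulr0 subrr.
by rewrite [eps * _]mulrC -mulrBr ler_wpM2l ?surv_ge0 ?h_drift.
Qed.

Lemma surv_mean_telescope (N : nat) :
  eps * \sum_(t < N) surv_prob e S delta t <= surv_mean 0 - surv_mean N.
Proof.
elim: N => [|N IH]; first by rewrite big_ord0 mulr0 subrr.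
by rewrite big_ord_recr /= mulrDr; have := surv_mean_step N; lra.
Qed.

Lemma additive_drift (B : R) : (0 < #|V|)%N -> 0 < eps -> (forall X, h X <= B) ->
  forall N, \sum_(t < N) surv_prob e S delta t <= B / eps.
Proof.
move=> V_ne eps_gt0 h_le N; rewrite ler_pdivlMr // mulrC.
apply: le_trans (surv_mean_telescope N) _.
have B_ge0 : 0 <= B := le_trans (h_ge0 [set: V]) (h_le [set: V]).
have mean0 : surv_mean 0 <= B.
  rewrite -[B]mul1r -(init_dist_sum V_ne) mulr_suml; apply: ler_sum => Y _ /=.
  case: (absorbing Y); first by rewrite mul0r mulr_ge0 ?init_dist_ge0.
  by apply: ler_wpM2l; [exact: init_dist_ge0 | exact: h_le].
by have := surv_mean_ge0 N; lra.
Qed.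

End Drift.

Lemma absorption_time_le (C : R) :
  (forall N, \sum_(t < N) surv_prob e S delta t <= C) ->
  (absorption_time e S delta <= C%:E)%E.
Proof.
move=> partial_le; apply: (lime_le (is_cvg_nneseries _)).
  by move=> t _ _; rewrite lee_fin surv_prob_ge0.
by apply: nearW => N; rewrite sumEFin lee_fin big_mkord; exact: partial_le.
Qed.

End AdditiveDrift.

Unset Implicit Arguments.

Theorem mainTheorem1 (R : realType) (V : finType) (e : rel V)
  (e_sym : symmetric e) (e_irr : irreflexive e)
  (V_ne : (0 < #|V|)%N) (e_conn : forall u v : V, connect e u v)
  (S : {set V}) (delta : R) (hdelta : 1 <= delta) :
  (absorption_time e S delta <= ((#|V| ^ 5)%N)%:R%:E)%E.
Proof.
have delta_ge0 : 0 <= delta := le_trans ler01 hdelta.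
set n : R := #|V|%:R; have n_gt0 : 0 < n by rewrite ltr0n.
apply: (absorption_time_le delta_ge0) => N.
rewrite natrX -/n (_ : n ^+ 5 = n ^+ 4 / n^-1); last by rewrite invrK exprSr.
apply: (additive_drift delta_ge0 (potential_ge0 R e) (drift S delta_ge0 e_sym e_conn)
         V_ne _ (potential_le_card R e)).
by rewrite invr_gt0.
Qed.
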